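(* Set $\lambda_*=1/\tau^2$. Along the branch of the discrete Neumann correspondence $\mathfrak B_r$ for which $\Gamma=\frac1\tau\mathbf I_r+O(\tau)$ as $\tau\to0$, one has $$\Gamma=\frac1\tau\mathbf I_r-\frac\tau2\big(X^TAX+P^TP\big)+O(\tau^2),$$ and, writing $\tilde X=X+\tau\dot X+O(\tau^2)$, $\tilde P=P+\tau\dot P+O(\tau^2)$, the first-order terms satisfy the continuous Neumann system with Euclidean metric $$\dot X=P,\qquad \dot P=AX+X\Lambda,\qquad \Lambda=-X^TAX-P^TP.$$
   Context: $A=\mathrm{diag}(a_1,\dots,a_n)$, $A(\lambda)=\lambda\mathbf I_n-A$, $A^{\pm1/2}(\lambda_* )$ the diagonal matrices with entries $(\lambda_*-a_i)^{\pm1/2}$ (positive for large real $\lambda_*$). $(X,P)$ are $n\times r$ matrices with $X^TX=\mathbf I_r$, $X^TP+P^TX=0$. The discrete Neumann correspondence is $\tilde X=A^{-1/2}(\lambda_* )(P+X\Gamma)$, $\tilde P=-A^{1/2}(\lambda_* )X+A^{-1/2}(\lambda_* )(P+X\Gamma)\Gamma$, where $\Gamma$ is a symmetric $r\times r$ solution of $\Gamma\mathbf U\Gamma+\Gamma\mathbf V+\mathbf V^T\Gamma-\mathbf W=0$ with $\mathbf U=X^TA^{-1}(\lambda_* )X$, $\mathbf V=X^TA^{-1}(\lambda_* )P$, $\mathbf W=\mathbf I_r-P^TA^{-1}(\lambda_* )P$. *)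

From HB Require Import structures.
From mathcomp Require Import all_boot all_order all_algebra.
Set Implicit Arguments. Unset Strict Implicit. Unset Printing Implicit Defensive.
Import Order.TTheory GRing.Theory Num.Theory.
Local Open Scope ring_scope.

Section Neumann.
Variables (R : rcfType) (n r : nat).

Definition Amat (a : 'rV[R]_n) : 'M[R]_n := diag_mx a.

Definition Alam (a : 'rV[R]_n) (lam : R) : 'M[R]_n := lam%:M - Amat a.

(* A^{1/2}(lambda), A^{-1/2}(lambda): diagonal, entries (lambda - a_i)^{+-1/2},
   positive square roots (meaningful when lambda > a_i). *)
Definition Ahalf (a : 'rV[R]_n) (lam : R) : 'M[R]_n :=
  diag_mx (\row_i Num.sqrt (lam - a 0 i)).
Definition Aminushalf (a : 'rV[R]_n) (lam : R) : 'M[R]_n :=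
  diag_mx (\row_i (Num.sqrt (lam - a 0 i))^-1).

Definition Umat (a : 'rV[R]_n) (lam : R) (X : 'M[R]_(n, r)) : 'M[R]_r :=
  X^T *m invmx (Alam a lam) *m X.
Definition Vmat (a : 'rV[R]_n) (lam : R) (X P : 'M[R]_(n, r)) : 'M[R]_r :=
  X^T *m invmx (Alam a lam) *m P.
Definition Wmat (a : 'rV[R]_n) (lam : R) (P : 'M[R]_(n, r)) : 'M[R]_r :=
  1%:M - P^T *m invmx (Alam a lam) *m P.

Definition riccati (a : 'rV[R]_n) (lam : R) (X P : 'M[R]_(n, r)) (G : 'M[R]_r) : Prop :=
  G^T = G /\
  G *m Umat a lam X *m G + G *m Vmat a lam X P + (Vmat a lam X P)^T *m G
    - Wmat a lam P = 0.

Definition Xtilde (a : 'rV[R]_n) (lam : R) (X P : 'M[R]_(n, r)) (G : 'M[R]_r)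
  : 'M[R]_(n, r) := Aminushalf a lam *m (P + X *m G).
Definition Ptilde (a : 'rV[R]_n) (lam : R) (X P : 'M[R]_(n, r)) (G : 'M[R]_r)
  : 'M[R]_(n, r) :=
  - (Ahalf a lam *m X) + Aminushalf a lam *m (P + X *m G) *m G.

End Neumann.

(* f(tau) = O(tau^k) as tau -> 0+ (entrywise, equivalently in any norm). *)
Definition bigO (R : rcfType) (m p : nat) (f : R -> 'M[R]_(m, p)) (k : nat) : Prop :=
  exists C delta : R, 0 < delta /\
    forall tau : R, 0 < tau -> tau < delta ->
      forall i j, `|f tau i j| <= C * tau ^+ k.

(* With lambda = tau^-2 the diagonal matrices expand entrywise as
   A(lambda)^-1 = tau^2 + tau^4 A + O(tau^6) and A^(-1/2)(lambda) = tau + O(tau^3).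
   Hence U = tau^2 + tau^4 X^T A X + O(tau^6) (as X^T X = 1), V = tau^2 X^T P + O(tau^4)
   and W = 1 - tau^2 P^T P + O(tau^4).  Writing Gamma = tau^-1 + H with H = O(tau), the
   Riccati equation becomes 2 tau H + tau^2 (X^T A X + P^T P) + O(tau^3) = 0: the
   O(tau) part of Gamma V + V^T Gamma cancels because X^T P is skew.  Substituted into the correspondence, with A^(1/2) = A^(-1/2) A(lambda),
   the singular terms cancel identically and the first-order terms are the Neumann flow. *)

From HB Require Import structures.
From mathcomp Require Import all_boot all_order all_algebra.
From mathcomp Require Import ring lra.
Set Implicit Arguments. Unset Strict Implicit. Unset Printing Implicit Defensive.
Import Order.TTheory GRing.Theory Num.Theory.
Local Open Scope ring_scope.

Section BigO.
Variable R : rcfType.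
Implicit Types (m p q k l o : nat).

Lemma bigO_bound m p (f : R -> 'M[R]_(m, p)) k : bigO f k ->
  exists C d : R, [/\ 0 <= C, 0 < d, d <= 1 &
    forall t, 0 < t -> t < d -> forall i j, `|f t i j| <= C * t ^+ k].
Proof.
move=> [C [d [d0 fO]]]; exists (Num.max C 0), (Num.min d 1); split.
- by rewrite le_max lexx orbT.
- by rewrite lt_min d0 ltr01.
- by rewrite ge_min lexx orbT.
move=> t t0; rewrite lt_min => /andP[td _] i j.
apply: (le_trans (fO t t0 td i j)); apply: ler_wpM2r; first exact/exprn_ge0/ltW.
by rewrite le_max lexx.
Qed.

Lemma bigO_remainder m p (f g : R -> 'M[R]_(m, p)) k :
  bigO (fun t => f t - g t) k ->
  exists2 h : R -> 'M[R]_(m, p), (forall t, f t = g t + h t) & bigO h k.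
Proof. by exists (fun t => f t - g t) => // t; rewrite addrC subrK. Qed.

Lemma eq_bigO m p (f g : R -> 'M[R]_(m, p)) k (d : R) : 0 < d ->
  (forall t, 0 < t -> t < d -> f t = g t) -> bigO g k -> bigO f k.
Proof.
move=> d0 fg [C [e [e0 gO]]]; exists C, (Num.min d e); split; first by rewrite lt_min d0.
by move=> t t0; rewrite lt_min => /andP[td te] i j; rewrite fg ?gO.
Qed.

Lemma bigO_add m p (f g : R -> 'M[R]_(m, p)) k :
  bigO f k -> bigO g k -> bigO (fun t => f t + g t) k.
Proof.
move=> /bigO_bound[C [d [C0 d0 _ fO]]] /bigO_bound[C' [d' [C'0 d'0 _ gO]]].
exists (C + C'), (Num.min d d'); split; first by rewrite lt_min d0.
move=> t t0; rewrite lt_min => /andP[td td'] i j.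
rewrite mxE mulrDl (le_trans (ler_normD _ _)) // lerD ?fO ?gO //.
Qed.

Lemma bigO_opp m p (f : R -> 'M[R]_(m, p)) k : bigO f k -> bigO (fun t => - f t) k.
Proof.
by move=> [C [d [d0 fO]]]; exists C, d; split=> // t t0 td i j; rewrite mxE normrN fO.
Qed.

Lemma bigO_sub m p (f g : R -> 'M[R]_(m, p)) k :
  bigO f k -> bigO g k -> bigO (fun t => f t - g t) k.
Proof. by move=> fO gO; apply: bigO_add fO (bigO_opp gO). Qed.

Lemma bigO_trmx m p (f : R -> 'M[R]_(m, p)) k : bigO f k -> bigO (fun t => (f t)^T) k.
Proof. by move=> [C [d [d0 fO]]]; exists C, d; split=> // t t0 td i j; rewrite mxE fO. Qed.

Lemma bigO_le m p (f : R -> 'M[R]_(m, p)) k l : bigO f l -> (k <= l)%N -> bigO f k.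
Proof.
move=> /bigO_bound[C [d [C0 d0 d1 fO]]] kl; exists C, d; split=> // t t0 td i j.
rewrite (le_trans (fO t t0 td i j)) // ler_wpM2l // ler_wiXn2l ?ltW //.
exact: lt_le_trans td d1.
Qed.

Lemma bigO_cst m p (M : 'M[R]_(m, p)) : bigO (fun _ => M) 0.
Proof.
exists (\sum_i \sum_j `|M i j|), 1; split=> // t _ _ i j.
rewrite expr0 mulr1 (bigD1 i) //= (bigD1 j) //= -addrA lerDl.
by rewrite addr_ge0 ?sumr_ge0 // => l _; rewrite sumr_ge0.
Qed.

Lemma bigO_scale m p (f : R -> 'M[R]_(m, p)) k (c : R) :
  bigO f k -> bigO (fun t => c *: f t) k.
Proof.
move=> /bigO_bound[C [d [C0 d0 _ fO]]]; exists (`|c| * C), d; split=> // t t0 td i j.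
by rewrite mxE normrM -mulrA ler_wpM2l ?fO.
Qed.

Lemma bigO_mulmx m p q (f : R -> 'M[R]_(m, p)) (g : R -> 'M[R]_(p, q)) k l o :
  bigO f k -> bigO g l -> (o <= k + l)%N -> bigO (fun t => f t *m g t) o.
Proof.
move=> /bigO_bound[C [d [C0 d0 _ fO]]] /bigO_bound[C' [d' [C'0 d'0 _ gO]]] okl.
apply: bigO_le okl; exists (p%:R * (C * C')), (Num.min d d'); split.
  by rewrite lt_min d0.
move=> t t0; rewrite lt_min => /andP[td td'] i j.
rewrite mxE (le_trans (ler_norm_sum _ _ _)) //.
have -> : p%:R * (C * C') * t ^+ (k + l) = \sum_(s < p) C * t ^+ k * (C' * t ^+ l).
  by rewrite sumr_const card_ord -mulr_natl exprD; ring.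
by apply: ler_sum => s _; rewrite normrM ler_pM ?fO ?gO.
Qed.

Lemma bigO_tpowZ m p (f : R -> 'M[R]_(m, p)) k l o :
  bigO f k -> (o <= l + k)%N -> bigO (fun t => t ^+ l *: f t) o.
Proof.
move=> /bigO_bound[C [d [C0 d0 _ fO]]] olk; apply: bigO_le olk.
exists C, d; split=> // t t0 td i j.
by rewrite mxE normrM normrX gtr0_norm // exprD mulrCA ler_wpM2l ?fO // exprn_ge0 ?ltW.
Qed.

Lemma bigO_tinvZ m p (f : R -> 'M[R]_(m, p)) k l o :
  bigO f k -> (l + o <= k)%N -> bigO (fun t => (t ^+ l)^-1 *: f t) o.
Proof.
move=> fO lok; have /bigO_bound[C [d [C0 d0 _ {}fO]]] := bigO_le fO lok.
exists C, d; split=> // t t0 td i j.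
have tl : 0 < t ^+ l by rewrite exprn_gt0.
rewrite mxE normrM normfV normrX gtr0_norm // ler_pdivrMl // mulrCA -exprD fO //.
Qed.

Lemma bigO_tZ m p (f : R -> 'M[R]_(m, p)) k o :
  bigO f k -> (o <= k.+1)%N -> bigO (fun t => t *: f t) o.
Proof. exact: (@bigO_tpowZ _ _ _ _ 1). Qed.

Lemma bigO_tVZ m p (f : R -> 'M[R]_(m, p)) k o :
  bigO f k -> (o.+1 <= k)%N -> bigO (fun t => t^-1 *: f t) o.
Proof. exact: (@bigO_tinvZ _ _ _ _ 1). Qed.

End BigO.

Section Entries.
Variable R : rcfType.
Implicit Types t x : R.

Lemma invAlam_entry_bound t x : 0 < t -> t ^+ 2 * `|x| <= 1 / 2 ->
  `|(t ^- 2 - x)^-1 - t ^+ 2 - t ^+ 4 * x| <= 2 * x ^+ 2 * t ^+ 6.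
Proof.
move=> t0 hx.
have tx : t ^+ 2 * x <= 1 / 2.
  by rewrite (le_trans _ hx) // ler_wpM2l ?exprn_ge0 ?ler_norm // ltW.
have w0 : 0 < 1 - t ^+ 2 * x by lra.
have tn : t != 0 by rewrite gt_eqF.
have wn : 1 - t ^+ 2 * x != 0 by rewrite gt_eqF.
have -> : (t ^- 2 - x)^-1 - t ^+ 2 - t ^+ 4 * x = t ^+ 6 * x ^+ 2 / (1 - t ^+ 2 * x).
  have -> : t ^- 2 - x = (1 - t ^+ 2 * x) / t ^+ 2 by field.
  by field; rewrite wn.
have h6 : 0 <= t ^+ 6 * x ^+ 2 by rewrite mulr_ge0 ?sqr_ge0 ?exprn_ge0 ?ltW.
rewrite ger0_norm ?divr_ge0 ?(ltW w0) // ler_pdivrMr //.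
rewrite [leRHS](_ : _ = t ^+ 6 * x ^+ 2 * (2 * (1 - t ^+ 2 * x))); last by ring.
by rewrite ler_peMr //; lra.
Qed.

Lemma Aminushalf_entry_bound t x : 0 < t -> t ^+ 2 * `|x| <= 1 / 2 ->
  `|(Num.sqrt (t ^- 2 - x))^-1 - t| <= 2 * `|x| * t ^+ 3.
Proof.
move=> t0 hx.
have tx : t ^+ 2 * x <= 1 / 2.
  by rewrite (le_trans _ hx) // ler_wpM2l ?exprn_ge0 ?ler_norm // ltW.
have tn : t != 0 by rewrite gt_eqF.
have y0 : 0 < t ^- 2 - x.
  have -> : t ^- 2 - x = (1 - t ^+ 2 * x) / t ^+ 2 by field.
  by rewrite divr_gt0 ?exprn_gt0 //; lra.
set s := Num.sqrt _.
have s0 : 0 < s by rewrite sqrtr_gt0.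
have ts2 : (t * s) ^+ 2 = 1 - t ^+ 2 * x by rewrite exprMn sqr_sqrtr ?ltW //; field.
have ts0 : 0 < t * s by rewrite mulr_gt0.
(* rationalize: [s^-1 - t = (1 - (t s)^2) / (s (1 + t s))], and [(t s)^2 >= 1/2] *)
have -> : s^-1 - t = t ^+ 2 * x / (s * (1 + t * s)).
  have -> : t ^+ 2 * x = 1 - (t * s) ^+ 2 by rewrite ts2; ring.
  by field; rewrite !gt_eqF // addr_gt0.
have ts1 : 1 <= 2 * (t * s).
  have : 1 / 2 <= (t * s) ^+ 2 by rewrite ts2; lra.
  nra.
have tx0 : 0 <= t ^+ 2 * `|x| by rewrite mulr_ge0 ?exprn_ge0 // ltW.
have den0 : 0 < s * (1 + t * s) by rewrite mulr_gt0 ?addr_gt0.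
rewrite normrM normfV normrM normrX (gtr0_norm t0) (gtr0_norm den0) ler_pdivrMr //.
rewrite [leRHS](_ : _ = t ^+ 2 * `|x| * (2 * (t * s) * (1 + t * s))); last by ring.
by rewrite ler_peMr //; nra.
Qed.

End Entries.

Ltac mx_expand := repeat progress rewrite ?(mulmxDl, mulmxDr, mulmxBl, mulmxBr,
  mulNmx, mulmxN, mul1mx, mulmx1, mulmxA, scalerDr, scalerBr, scalerA, scalerN, opprD, opprK)
  -?scalemxAl -?scalemxAr.

Ltac mx_field := mx_expand; apply/matrixP => i j; rewrite !mxE; field.

Section Diagonal.
Variables (R : rcfType) (n : nat) (a : 'rV[R]_n).

Lemma Alam_diag lam : Alam a lam = diag_mx (\row_i (lam - a 0 i)).
Proof.
apply/matrixP => i j; rewrite !mxE.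
by case: eqP => [->|_]; rewrite ?mulr1n ?mulr0n ?subr0.
Qed.

Lemma invmx_diag (d : 'rV[R]_n) : (forall i, d 0 i != 0) ->
  invmx (diag_mx d) = diag_mx (\row_i (d 0 i)^-1).
Proof.
move=> d_neq0.
have dV : diag_mx d *m diag_mx (\row_i (d 0 i)^-1) = 1%:M.
  rewrite mulmx_diag; apply/matrixP => i j; rewrite !mxE.
  by case: eqP => [->|_]; rewrite ?mulr1n ?mulr0n ?mulfV.
have [d_unit _] := mulmx1_unit dV.
by rewrite -[RHS](mulKmx d_unit) dV mulmx1.
Qed.

Lemma Ahalf_Aminushalf lam : (forall i, a 0 i < lam) ->
  Ahalf a lam = Aminushalf a lam *m Alam a lam.
Proof.
move=> a_lt; rewrite Alam_diag /Ahalf /Aminushalf mulmx_diag; congr diag_mx.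
apply/rowP => i; rewrite !mxE.
have y0 : 0 < lam - a 0 i by rewrite subr_gt0.
have s0 : 0 < Num.sqrt (lam - a 0 i) by rewrite sqrtr_gt0.
by rewrite -{3}(sqr_sqrtr (ltW y0)) expr2 mulKf ?gt_eqF.
Qed.

Local Notation c := (\sum_i `|a 0 i|).

Lemma norm_entry_le_sum i : `|a 0 i| <= c.
Proof. by rewrite (bigD1 i) //= lerDl sumr_ge0. Qed.

Let c_ge0 : 0 <= c. Proof. exact: sumr_ge0. Qed.

Lemma small_tau_entries : exists d : R, 0 < d /\
  forall t, 0 < t -> t < d -> forall i, t ^+ 2 * `|a 0 i| <= 1 / 2.
Proof.
have c0 := c_ge0.
exists (2 * (c + 1))^-1; split; first by rewrite invr_gt0; lra.
move=> t t0 tc i; have ac := norm_entry_le_sum i.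
have tc1 : t * (2 * (c + 1)) < 1 by rewrite -ltr_pdivlMr //; lra.
have t1 : t <= 1 by nra.
have : t * `|a 0 i| <= t * c by rewrite ler_pM2l.
by rewrite expr2 -mulrA; nra.
Qed.

Lemma lt_entry_tVexpr2 t i : 0 < t -> t ^+ 2 * `|a 0 i| <= 1 / 2 -> a 0 i < t ^- 2.
Proof.
move=> t0 small; have t2 : 0 < t ^+ 2 by rewrite exprn_gt0.
have : t ^+ 2 * a 0 i <= 1 / 2 by rewrite (le_trans _ small) // ler_pM2l // ler_norm.
by rewrite -(ltr_pM2l t2) mulfV ?gt_eqF //; lra.
Qed.

Lemma invAlam_expansion :
  bigO (fun t => invmx (Alam a (t ^- 2)) - (t ^+ 2 *: 1%:M + t ^+ 4 *: Amat a)) 6.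
Proof.
have [d [d0 small]] := small_tau_entries.
exists (2 * c ^+ 2), d; split=> // t t0 td i j.
have lt_a := fun k => lt_entry_tVexpr2 t0 (small t t0 td k).
rewrite Alam_diag invmx_diag => [|k]; last by rewrite mxE subr_eq0 gt_eqF ?lt_a.
rewrite /Amat !mxE; case: (i == j); rewrite ?mulr1n ?mulr0n ?mulr1 ?mulr0; last first.
  by rewrite addr0 subr0 normr0 !mulr_ge0 ?exprn_ge0 // ltW.
rewrite opprD addrA (le_trans (invAlam_entry_bound t0 (small t t0 td i))) //.
rewrite ler_pM2r ?exprn_gt0 // ler_pM2l // -[a 0 i ^+ 2]ger0_norm ?sqr_ge0 // normrX.
by rewrite ler_pXn2r ?nnegrE ?norm_entry_le_sum.
Qed.

Lemma Aminushalf_expansion : bigO (fun t => Aminushalf a (t ^- 2) - t *: 1%:M) 3.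
Proof.
have [d [d0 small]] := small_tau_entries.
exists (2 * c), d; split=> // t t0 td i j.
rewrite /Aminushalf !mxE; case: (i == j); rewrite ?mulr1n ?mulr0n ?mulr1 ?mulr0; last first.
  by rewrite subr0 normr0 !mulr_ge0 ?exprn_ge0 // ltW.
rewrite (le_trans (Aminushalf_entry_bound t0 (small t t0 td i))) //.
by rewrite ler_pM2r ?exprn_gt0 // ler_pM2l ?norm_entry_le_sum.
Qed.

Lemma Ahalf_near0 : exists2 d : R, 0 < d & forall t, 0 < t -> t < d ->
  Ahalf a (t ^- 2) = Aminushalf a (t ^- 2) *m (t ^- 2 *: 1%:M - Amat a).
Proof.
have [d [d0 small]] := small_tau_entries; exists d => // t t0 td.
rewrite Ahalf_Aminushalf => [|i]; first by rewrite /Alam scalemx1.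
exact: lt_entry_tVexpr2 t0 (small t t0 td i).
Qed.

Lemma sandwich_invAlam_expansion p q (Y : 'M[R]_(n, p)) (Z : 'M[R]_(n, q)) :
  bigO (fun t => Y^T *m invmx (Alam a (t ^- 2)) *m Z
                 - (t ^+ 2 *: (Y^T *m Z) + t ^+ 4 *: (Y^T *m Amat a *m Z))) 6.
Proof.
have hYD := bigO_mulmx (o := 6) (bigO_cst Y^T) invAlam_expansion isT.
apply: (eq_bigO ltr01 _ (bigO_mulmx (o := 6) hYD (bigO_cst Z) isT)) => t _ _.
by mx_expand.
Qed.

Lemma sandwich_invAlam_leading p q (Y : 'M[R]_(n, p)) (Z : 'M[R]_(n, q)) :
  bigO (fun t => Y^T *m invmx (Alam a (t ^- 2)) *m Z - t ^+ 2 *: (Y^T *m Z)) 4.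
Proof.
apply: (eq_bigO ltr01 _ (bigO_add (bigO_le (k := 4) (sandwich_invAlam_expansion Y Z) isT)
             (bigO_tpowZ (l := 4) (o := 4) (bigO_cst (Y^T *m Amat a *m Z)) isT))).
by move=> t _ _; rewrite opprD addrA subrK.
Qed.

End Diagonal.

Section RiccatiExpansion.
Variables (R : rcfType) (r : nat).

Definition riccati_remainder (t : R) (H M E K V1 V1T W1 : 'M[R]_r) :=
  let U1 := t ^+ 4 *: M + E in
  t ^- 2 *: E + t^-1 *: (H *m U1 + U1 *m H) + H *m (t ^+ 2 *: 1%:M + U1) *m H
  + t^-1 *: (V1 + V1T) + t ^+ 2 *: (H *m K - K *m H) + H *m V1 + V1T *m H - W1.

Lemma riccati_residualE (t : R) (H M E K V1 V1T Q W1 : 'M[R]_r) : t != 0 ->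
  let G := t^-1 *: 1%:M + H in
  G *m (t ^+ 2 *: 1%:M + t ^+ 4 *: M + E) *m G + G *m (t ^+ 2 *: K + V1)
    + (- (t ^+ 2 *: K) + V1T) *m G - (1%:M - t ^+ 2 *: Q + W1)
  = (2 * t) *: (G - (t^-1 *: 1%:M - (t / 2) *: (M + Q)))
    + riccati_remainder t H M E K V1 V1T W1.
Proof. by move=> t0; rewrite /riccati_remainder /=; mx_field. Qed.

Variables (M K Q : 'M[R]_r).

Lemma bigO_riccati_remainder (H E V1 V1T W1 : R -> 'M[R]_r) :
  bigO H 1 -> bigO E 5 -> bigO V1 4 -> bigO V1T 4 -> bigO W1 3 ->
  bigO (fun t => riccati_remainder t (H t) M (E t) K (V1 t) (V1T t) (W1 t)) 3.
Proof.
move=> hH hE hV1 hV1T hW1; rewrite /riccati_remainder /=.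
have hU1 : bigO (fun t => t ^+ 4 *: M + E t) 4.
  by apply: bigO_add; [apply: bigO_tpowZ (bigO_cst M) _ | apply: bigO_le hE _].
have hU : bigO (fun t => t ^+ 2 *: 1%:M + (t ^+ 4 *: M + E t)) 2.
  by apply: bigO_add; [apply: bigO_tpowZ (bigO_cst _) _ | apply: bigO_le hU1 _].
apply: bigO_sub hW1; repeat apply: bigO_add.
- by apply: bigO_tinvZ hE _.
- apply: (bigO_tVZ (k := 4)) _ => //.
  by apply: bigO_add; [apply: bigO_mulmx hH hU1 _ | apply: bigO_mulmx hU1 hH _].
- by apply: bigO_mulmx (bigO_mulmx (o := 3) hH hU _) hH _.
- by apply: bigO_tVZ (bigO_add hV1 hV1T) _.
- apply: (bigO_tpowZ (k := 1)) _ => //.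
  by apply: bigO_sub; [apply: bigO_mulmx hH (bigO_cst K) _ | apply: bigO_mulmx (bigO_cst K) hH _].
- by apply: bigO_mulmx hH hV1 _.
- by apply: bigO_mulmx hV1T hH _.
Qed.

Lemma riccati_expansion (G U V W : R -> 'M[R]_r) (d : R) : K^T = - K ->
  bigO (fun t => U t - (t ^+ 2 *: 1%:M + t ^+ 4 *: M)) 5 ->
  bigO (fun t => V t - t ^+ 2 *: K) 4 ->
  bigO (fun t => W t - (1%:M - t ^+ 2 *: Q)) 3 ->
  bigO (fun t => G t - t^-1 *: 1%:M) 1 -> 0 < d ->
  (forall t, 0 < t -> t < d ->
     G t *m U t *m G t + G t *m V t + (V t)^T *m G t - W t = 0) ->
  bigO (fun t => G t - (t^-1 *: 1%:M - (t / 2) *: (M + Q))) 2.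
Proof.
move=> skewK /bigO_remainder[E eU hE] /bigO_remainder[V1 eV hV1].
move=> /bigO_remainder[W1 eW hW1] /bigO_remainder[H eG hH] d0 ric.
have hrem := bigO_riccati_remainder hH hE hV1 (bigO_trmx hV1) hW1.
apply: (eq_bigO d0 _ (bigO_tVZ (o := 2) (bigO_scale (- 2^-1) hrem) isT)) => t t0 td.
have t2 : 2 * t != 0 by rewrite gt_eqF ?mulr_gt0.
apply: (scalerI t2); rewrite !scalerA.
have -> : 2 * t / t * - 2^-1 = -1 by field; rewrite gt_eqF.
rewrite scaleN1r; apply/eqP; rewrite -addr_eq0; apply/eqP.
have eVT : (V t)^T = - (t ^+ 2 *: K) + (V1 t)^T.
  by rewrite eV linearD linearZ /= skewK scalerN.
have := ric t t0 td; rewrite eU eVT eV eW eG.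
by rewrite riccati_residualE ?gt_eqF.
Qed.

End RiccatiExpansion.

Section CorrespondenceExpansion.
Variables (R : rcfType) (n r : nat) (A : 'M[R]_n) (X P : 'M[R]_(n, r)) (Lam : 'M[R]_r).

Lemma Xtilde_residualE (t : R) (B3 : 'M[R]_n) (H : 'M[R]_r) : t != 0 ->
  (t *: 1%:M + B3) *m (P + X *m (t^-1 *: 1%:M + H)) - (X + t *: P)
  = t *: (X *m H) + B3 *m P + t^-1 *: (B3 *m X) + B3 *m X *m H.
Proof. by move=> t0; mx_field. Qed.

Lemma Ptilde_residualE (t : R) (B3 : 'M[R]_n) (H : 'M[R]_r) : t != 0 ->
  let B := t *: 1%:M + B3 in let G := t^-1 *: 1%:M + H in
  - (B *m (t ^- 2 *: 1%:M - A) *m X) + B *m (P + X *m G) *m G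
    - (P + t *: (A *m X + X *m Lam))
  = 2%:R *: (X *m (H - (t / 2) *: Lam)) + t *: (P *m H) + t *: (X *m H *m H)
    + B3 *m A *m X + t^-1 *: (B3 *m P) + B3 *m P *m H
    + 2%:R *: (t^-1 *: (B3 *m X *m H)) + B3 *m X *m H *m H.
Proof. by move=> t0 /=; mx_field. Qed.

Variables (B : R -> 'M[R]_n) (G : R -> 'M[R]_r).
Hypotheses (hB : bigO (fun t => B t - t *: 1%:M) 3)
  (hG : bigO (fun t => G t - t^-1 *: 1%:M) 1).

Lemma Xtilde_expansion : bigO (fun t => B t *m (P + X *m G t) - (X + t *: P)) 2.
Proof.
have [B3 eB hB3] := bigO_remainder hB; have [H eG hH] := bigO_remainder hG.
apply: (eq_bigO ltr01) => [t t0 _|]; first by rewrite eB eG Xtilde_residualE ?gt_eqF.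
repeat apply: bigO_add.
- by apply: bigO_tZ (bigO_mulmx (o := 1) (bigO_cst X) hH _) _.
- by apply: bigO_mulmx hB3 (bigO_cst P) _.
- by apply: bigO_tVZ (bigO_mulmx (o := 3) hB3 (bigO_cst X) _) _.
- by apply: bigO_mulmx (bigO_mulmx (o := 3) hB3 (bigO_cst X) _) hH _.
Qed.

Lemma Ptilde_expansion :
  bigO (fun t => G t - (t^-1 *: 1%:M + (t / 2) *: Lam)) 2 ->
  bigO (fun t => - (B t *m (t ^- 2 *: 1%:M - A) *m X) + B t *m (P + X *m G t) *m G t
                 - (P + t *: (A *m X + X *m Lam))) 2.
Proof.
move=> hG2; have [B3 eB hB3] := bigO_remainder hB; have [H eG hH] := bigO_remainder hG.
have hH2 : bigO (fun t => H t - (t / 2) *: Lam) 2.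
  by apply: (eq_bigO ltr01 _ hG2) => t _ _; rewrite eG opprD addrACA subrr add0r.
have hXH : bigO (fun t => X *m H t) 1 by apply: bigO_mulmx (bigO_cst X) hH _.
have hB3X : bigO (fun t => B3 t *m X) 3 by apply: bigO_mulmx hB3 (bigO_cst X) _.
apply: (eq_bigO ltr01) => [t t0 _|]; first by rewrite eB eG Ptilde_residualE ?gt_eqF.
repeat apply: bigO_add.
- by apply: bigO_scale; apply: bigO_mulmx (bigO_cst X) hH2 _.
- by apply: bigO_tZ (bigO_mulmx (o := 1) (bigO_cst P) hH _) _.
- by apply: bigO_tZ (bigO_mulmx (o := 2) hXH hH _) _.
- by apply: bigO_mulmx (bigO_mulmx (o := 3) hB3 (bigO_cst A) _) (bigO_cst X) _.
- by apply: bigO_tVZ (bigO_mulmx (o := 3) hB3 (bigO_cst P) _) _.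
- by apply: bigO_mulmx (bigO_mulmx (o := 3) hB3 (bigO_cst P) _) hH _.
- by apply: bigO_scale; apply: bigO_tVZ (bigO_mulmx (o := 4) hB3X hH _) _.
- by apply: bigO_mulmx (bigO_mulmx (o := 4) hB3X hH _) hH _.
Qed.

End CorrespondenceExpansion.

Theorem mainTheorem17 (R : rcfType) (n r : nat) (a : 'rV[R]_n)
  (X P : 'M[R]_(n, r))
  (hXX : X^T *m X = 1%:M)
  (hXP : X^T *m P + P^T *m X = 0)
  (Gam : R -> 'M[R]_r)
  (delta0 : R) (hdelta0 : 0 < delta0)
  (hbranch : forall tau : R, 0 < tau -> tau < delta0 ->
     riccati a (tau ^- 2) X P (Gam tau))
  (hGam : bigO (fun tau => Gam tau - tau^-1 *: 1%:M) 1) :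
  let A := Amat a in
  let Lambda := - (X^T *m A *m X) - P^T *m P in
  let Xdot := P in
  let Pdot := A *m X + X *m Lambda in
  bigO (fun tau => Gam tau
          - (tau^-1 *: 1%:M - (tau / 2) *: (X^T *m A *m X + P^T *m P))) 2
  /\ bigO (fun tau => Xtilde a (tau ^- 2) X P (Gam tau) - (X + tau *: Xdot)) 2
  /\ bigO (fun tau => Ptilde a (tau ^- 2) X P (Gam tau) - (P + tau *: Pdot)) 2.
Proof.
move=> A Lambda Xdot Pdot.
have skewK : (X^T *m P)^T = - (X^T *m P).
  by rewrite trmx_mul trmxK; apply/eqP; rewrite -addr_eq0 addrC hXP.
have hU := bigO_le (k := 5) (sandwich_invAlam_expansion a X X) isT.
rewrite hXX in hU.
have hV := sandwich_invAlam_leading a X P.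
have hW : bigO (fun t => Wmat a (t ^- 2) P - (1%:M - t ^+ 2 *: (P^T *m P))) 3.
  apply: (eq_bigO ltr01 _ (bigO_opp (bigO_le (k := 3) (sandwich_invAlam_leading a P P) isT))).
  by move=> t _ _; rewrite /Wmat !opprB addrC addrA subrK.
have hG2 := riccati_expansion skewK hU hV hW hGam hdelta0 (fun t t0 td => (hbranch t t0 td).2).
split; first exact: hG2.
split; first exact: Xtilde_expansion (Aminushalf_expansion a) hGam.
have [d d0 eAhalf] := Ahalf_near0 a.
apply: (eq_bigO d0 _ (Ptilde_expansion A X P (Lam := Lambda) (Aminushalf_expansion a) hGam _)).
  by move=> t t0 td; rewrite /Ptilde eAhalf.
apply: (eq_bigO ltr01 _ hG2) => t _ _; congr (_ - (_ + _)).
by rewrite /Lambda /A -scalerN opprD.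
Qed.
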